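(* Let $M=(S,s_0,\mathbf{P})$ be a DTMC satisfying the standing assumptions below and let $p\in(0,1]$ with $p>\Pr_{s_0}(\lozenge\mathit{error})$. Then every $p$-prima facie cause $C\subseteq S$ of $\lozenge\mathit{error}$ induces a state-based $p$-cause; namely, $Q:=C\cup\{\mathit{error}\}\subseteq S_p$ and $\Pi=\{s_0\cdots s_n\in\operatorname{Paths}_{\operatorname{fin}}(M)\mid s_n\in Q,\ s_i\notin Q \text{ for all } i<n\}$ is a state-based $p$-cause for $\lozenge\mathit{error}$ in $M$.
   Context: A DTMC $M=(S,s_0,\mathbf{P})$ has a finite state set $S$, initial state $s_0$, and transition function $\mathbf{P}\colon S\times S\to[0,1]$ with rows summing to $1$. Finite/infinite paths are state sequences from $s_0$ along positive-probability transitions, with the standard cylinder-set probability measure on infinite paths; $\Pr_s(\lozenge X)$ is the probability of eventually reaching $X$ from $s$. Standing assumptions: every state is reached from $s_0$ with positive probability; there are states $\mathit{error},\mathit{safe}$ with $\Pr_{\mathit{safe}}(\lozenge\mathit{error})=0$, $\mathit{safe}$ being the unique state from which $\mathit{error}$ is unreachable, so $\Pr_{s_0}(\lozenge\{\mathit{error},\mathit{safe}\})=1$. Let $S_p=\{s\mid\Pr_s(\lozenge\mathit{error})\ge p\}$. A $p$-cause for $\lozenge\mathit{error}$ in $M$ is a prefix-free set $\Pi$ of finite paths (no element has a proper prefix in $\Pi$) such that almost every infinite path visiting $\mathit{error}$ has a prefix in $\Pi$ and every element of $\Pi$ ends in a state of $S_p$. A $p$-cause $\Pi$ is state-based if there is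 $Q\subseteq S_p$ with $\Pi=\{s_0\cdots s_n\in\operatorname{Paths}_{\operatorname{fin}}(M)\mid s_n\in Q,\ s_i\notin Q\ \forall i<n\}$. A set $C\subseteq S$ is a $p$-prima facie cause of $\lozenge\mathit{error}$ if (1) $C$ is reachable from $s_0$ and $\mathit{error}\notin C$, (2) $\Pr_s(\lozenge\mathit{error})\ge p$ for all $s\in C$, and (3) $\Pr_{s_0}(\lozenge\mathit{error})<p$. *)

From HB Require Import structures.
From mathcomp Require Import all_boot all_order all_algebra.
From mathcomp Require Import all_classical all_reals all_analysis.
Unset Printing Implicit Defensive.
Import Order.TTheory GRing.Theory Num.Theory.
Local Open Scope classical_set_scope.
Local Open Scope ring_scope.

(* Infinite state sequences over the finite state type S (the point s0 is only
   used to equip the type with a pointedType structure). *)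
Definition pspace {S : finType} (s0 : S) : Type := nat -> S.
HB.instance Definition _ (S : finType) (s0 : S) := gen_eqMixin (pspace s0).
HB.instance Definition _ (S : finType) (s0 : S) := gen_choiceMixin (pspace s0).
HB.instance Definition _ (S : finType) (s0 : S) :=
  isPointed.Build (pspace s0) (fun _ => s0).

Definition pref {S : finType} (pi : nat -> S) (n : nat) : seq S :=
  [seq pi i | i <- iota 0 n].

Definition cyl {S : finType} (s0 : S) (w : seq S) : set (pspace s0) :=
  [set pi | pref pi (size w) = w].

Definition cylinders {S : finType} (s0 : S) : set (set (pspace s0)) :=
  range (@cyl S s0).

Definition PS {S : finType} (s0 : S) := g_sigma_algebraType (cylinders s0).

Fixpoint pprob {R : realType} {S : finType} (P : S -> S -> R) (w : seq S) : R :=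
  match w with
  | x :: ((y :: _) as w') => P x y * pprob P w'
  | _ => 1
  end.

(* mu s is the standard (cylinder-set) probability measure on infinite paths
   of the DTMC started in state s:  mu s (Cyl(x0 ... xn)) = [x0 = s] * prod P. *)
Definition is_path_measure {R : realType} {S : finType} (s0 : S)
  (P : S -> S -> R) (mu : S -> probability (PS s0) R) : Prop :=
  forall (s : S) (w : seq S),
    mu s (cyl s0 w) =
    (if w is x :: _ then (x == s)%:R * pprob P w else 1)%:E.

Definition ev_reach {S : finType} (s0 : S) (X : {set S}) : set (pspace s0) :=
  [set pi | exists n, pi n \in X].

Definition Pr {R : realType} {S : finType} (s0 : S)
  (mu : S -> probability (PS s0) R) (s : S) (X : {set S}) : R :=
  fine (mu s (ev_reach s0 X)).

Definition edge {R : realType} {S : finType} (P : S -> S -> R) : rel S :=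
  fun s t => 0 < P s t.
Definition reachable {R : realType} {S : finType} (P : S -> S -> R) (s t : S) : bool :=
  connect (edge P) s t.

Definition is_fin_path {R : realType} {S : finType} (P : S -> S -> R) (s0 : S)
  (w : seq S) : bool :=
  if w is x :: w' then (x == s0) && path (edge P) x w' else false.

Definition is_inf_path {R : realType} {S : finType} (P : S -> S -> R) (s0 : S)
  (pi : nat -> S) : Prop :=
  pi 0%N = s0 /\ forall i, 0 < P (pi i) (pi i.+1).

Definition Sp {R : realType} {S : finType} (s0 : S)
  (mu : S -> probability (PS s0) R) (err : S) (p : R) : {set S} :=
  [set s | p <= Pr s0 mu s [set err]].

Definition prefix_free {S : finType} (Pi : set (seq S)) : Prop :=
  forall w w', Pi w -> Pi w' -> prefix w w' -> (size w < size w')%N -> False.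

Definition p_cause {R : realType} {S : finType} (s0 : S) (P : S -> S -> R)
  (mu : S -> probability (PS s0) R) (err : S) (p : R) (Pi : set (seq S)) : Prop :=
  [/\ (forall w, Pi w -> is_fin_path P s0 w),
      prefix_free Pi,
      {ae mu s0, forall pi : PS s0,
          is_inf_path P s0 pi -> (exists n, pi n = err) ->
          exists n, Pi (pref pi n.+1)}
    & (forall w, Pi w -> last s0 w \in Sp s0 mu err p)].

Definition first_visit {R : realType} {S : finType} (s0 : S) (P : S -> S -> R)
  (Q : {set S}) : set (seq S) :=
  [set w | [/\ is_fin_path P s0 w, last s0 w \in Q &
              forall i, (i < (size w).-1)%N -> nth s0 w i \notin Q]].

Definition state_based {R : realType} {S : finType} (s0 : S) (P : S -> S -> R)
  (mu : S -> probability (PS s0) R) (err : S) (p : R) (Pi : set (seq S)) : Prop :=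
  exists Q : {set S}, Q \subset Sp s0 mu err p /\ Pi = first_visit s0 P Q.

Definition prima_facie {R : realType} {S : finType} (s0 : S) (P : S -> S -> R)
  (mu : S -> probability (PS s0) R) (err : S) (p : R) (C : {set S}) : Prop :=
  [/\ (exists2 c, c \in C & reachable P s0 c) /\ err \notin C,
      (forall s, s \in C -> p <= Pr s0 mu s [set err])
    & Pr s0 mu s0 [set err] < p].

From HB Require Import structures.
From mathcomp Require Import all_boot all_order all_algebra.
From mathcomp Require Import all_classical all_reals all_analysis.
Import Order.TTheory GRing.Theory Num.Theory.
Local Open Scope classical_set_scope.
Local Open Scope ring_scope.

(* Q = C u {error} lies in S_p: C does by the prima facie condition and error
   does because Pr_error(<> error) = 1 >= p.  The first visits to any such Q
   form a prefix-free set of finite paths, and every infinite path visiting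
   error visits Q, so its prefix up to the first visit to Q lies in that set;
   this holds for every path, not only almost surely. *)

Section Prefixes.
Context {S : finType}.
Implicit Types (pi : nat -> S) (e : rel S).

Lemma size_pref pi n : size (pref pi n) = n.
Proof. by rewrite /pref size_map size_iota. Qed.

Lemma nth_pref pi n i x : (i < n)%N -> nth x (pref pi n) i = pi i.
Proof. by move=> ltin; rewrite /pref (nth_map 0%N) ?size_iota // nth_iota. Qed.

Lemma last_pref pi n x : last x (pref pi n.+1) = pi n.
Proof. by rewrite -nth_last size_pref nth_pref. Qed.

Lemma path_map_iota e pi k m :
  (forall i, e (pi i) (pi i.+1)) -> path e (pi k) [seq pi i | i <- iota k.+1 m].
Proof. by move=> epi; elim: m k => //= m IHm k; rewrite epi IHm. Qed.

End Prefixes.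

Section Measurability.
Context {S : finType} (s0 : S).

Lemma measurable_cyl (w : seq S) : measurable (cyl s0 w : set (PS s0)).
Proof. by apply: sub_sigma_algebra; exists w. Qed.

Lemma ev_reach_bigcup_cyl (X : {set S}) :
  ev_reach s0 X =
  \bigcup_(w in [set w : seq S | w != [::] /\ last s0 w \in X]%classic) cyl s0 w.
Proof.
apply/seteqP; split=> pi.
  move=> [n Xn]; exists (pref pi n.+1); first by split; last rewrite last_pref.
  by rewrite /cyl /mkset size_pref.
case=> w /= [w_nil Xw] piw; exists (size w).-1.
by rewrite -(last_pref pi _ s0) prednK ?lt0n ?size_eq0 // [pref _ _]piw.
Qed.

Lemma measurable_ev_reach (X : {set S}) :
  measurable (ev_reach s0 X : set (PS s0)).
Proof.
rewrite ev_reach_bigcup_cyl bigcup_mkcond.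
apply: countable_bigcupT_measurable => [|w]; first exact: countableP.
by case: ifP => _; [exact: measurable_cyl | exact: measurable0].
Qed.

End Measurability.

Section FirstVisit.
Context {R : realType} {S : finType} {s0 : S} {P : S -> S -> R}.

Lemma is_fin_path_pref (pi : nat -> S) n :
  is_inf_path P s0 pi -> is_fin_path P s0 (pref pi n.+1).
Proof.
case=> pi0 Ppi; rewrite /is_fin_path /pref /= pi0 eqxx -pi0.
exact: path_map_iota.
Qed.

Lemma prefix_free_first_visit (Q : {set S}) : prefix_free (first_visit s0 P Q).
Proof.
move=> w w' [w_path Qw _] [_ _ notQ] /prefixP[t def_w']; subst w'.
rewrite size_cat => lt_w_wt.
have w_gt0 : (0 < size w)%N by case: (w) w_path.
have lt_last : ((size w).-1 < size w)%N by rewrite prednK.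
suff : ((size w).-1 < (size (w ++ t)).-1)%N.
  by move/notQ; rewrite nth_cat lt_last nth_last Qw.
by rewrite size_cat -ltnS prednK // (ltn_predK lt_w_wt).
Qed.

Lemma exists_first_visit_pref (Q : {set S}) (pi : nat -> S) n :
  is_inf_path P s0 pi -> pi n \in Q ->
  exists m, first_visit s0 P Q (pref pi m.+1).
Proof.
move=> pi_path Qn; have exQ : exists m, pi m \in Q by exists n.
case: (ex_minnP exQ) => m Qm minm; exists m; split.
- exact: is_fin_path_pref.
- by rewrite last_pref.
- move=> i; rewrite size_pref => lt_im; rewrite nth_pref; last exact: ltnW.
  by apply/negP => /minm; rewrite leqNgt lt_im.
Qed.
Arguments exists_first_visit_pref {Q pi n}.

End FirstVisit.

Section Causes.
Context {R : realType} {S : finType} {s0 : S} {P : S -> S -> R}.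
Context {mu : S -> probability (PS s0) R}.
Hypothesis mu_paths : is_path_measure s0 P mu.

Lemma Pr_reach_mem (s : S) (X : {set S}) : s \in X -> Pr s0 mu s X = 1.
Proof.
move=> Xs; rewrite /Pr; suff -> : mu s (ev_reach s0 X) = 1%E by [].
apply/eqP; rewrite eq_le probability_le1 /=; last exact: measurable_ev_reach.
have <- : mu s (cyl s0 [:: s]) = 1%E by rewrite mu_paths eqxx mul1r.
apply: le_measure; rewrite ?inE;
  [exact: measurable_cyl | exact: measurable_ev_reach |].
by move=> pi; rewrite /cyl /mkset /pref /= => -[pi0]; exists 0%N; rewrite pi0.
Qed.

Lemma err_in_Sp (err : S) (p : R) : p <= 1 -> err \in Sp s0 mu err p.
Proof. by rewrite /Sp inE Pr_reach_mem ?set11. Qed.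

Lemma first_visit_p_cause (err : S) (p : R) (Q : {set S}) :
  Q \subset Sp s0 mu err p -> err \in Q ->
  p_cause s0 P mu err p (first_visit s0 P Q).
Proof.
move=> QSp Qerr; split.
- by move=> w [].
- exact: prefix_free_first_visit.
- apply: aeW => pi pi_path [n pin].
  by rewrite -pin in Qerr; apply: exists_first_visit_pref pi_path Qerr.
- by move=> w [_ /(fintype.subsetP QSp)].
Qed.

End Causes.

Theorem lemma2 (R : realType) (S : finType) (s0 err safe : S)
  (P : S -> S -> R) (mu : S -> probability (PS s0) R) (p : R) :
  (* DTMC *)
  (forall s t, 0 <= P s t) ->
  (forall s, \sum_(t : S) P s t = 1) ->
  is_path_measure s0 P mu ->
  (* standing assumptions *)
  (forall s, 0 < Pr s0 mu s0 [set s]) ->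
  Pr s0 mu safe [set err] = 0 ->
  (forall s, ~~ reachable P s err -> s = safe) ->
  Pr s0 mu s0 [set err; safe] = 1 ->
  (* p *)
  0 < p <= 1 -> Pr s0 mu s0 [set err] < p ->
  forall C : {set S}, prima_facie s0 P mu err p C ->
  let Q := C :|: [set err] in
  [/\ Q \subset Sp s0 mu err p,
      p_cause s0 P mu err p (first_visit s0 P Q)
    & state_based s0 P mu err p (first_visit s0 P Q)].
Proof.
move=> _ _ mu_paths _ _ _ _ /andP[_ p_le1] _ C [_ C_Sp _] Q.
have QSp : Q \subset Sp s0 mu err p.
  rewrite finset.subUset finset.sub1set (err_in_Sp mu_paths) // andbT.
  by apply/fintype.subsetP => s /C_Sp; rewrite inE.
split => //; last by exists Q.
by apply: first_visit_p_cause => //; rewrite !inE eqxx orbT.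
Qed.
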